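(* For every integer $n\ge 9$, the number of partitions of $n$ into odd parts each at least $5$ equals the number of partitions of $n$ in which the part $1$ occurs at most twice (zero, one, or two times), the parts larger than $1$ are pairwise distinct, there are at least three parts that are $\ge 2$, and the three largest parts are consecutive integers. *)

From mathcomp Require Import all_boot.
Set Implicit Arguments. Unset Strict Implicit. Unset Printing Implicit Defensive.

(* Finite encoding: a partition of n has at most n parts, each at most n, so it
   corresponds bijectively to a nonincreasing n-tuple with entries in 'I_(n+1)
   and sum n, padded with zeros at the end.  [parts_of t] recovers the partition. *)
Definition parts_of (n : nat) (t : n.-tuple 'I_n.+1) : seq nat :=
  [seq x <- map (@nat_of_ord n.+1) t | 0 < x].

Definition padded_partition (n : nat) (t : n.-tuple 'I_n.+1) : bool :=
  let s := map (@nat_of_ord n.+1) t in sorted geq s && (sumn s == n).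

Definition npart (n : nat) (P : pred (seq nat)) : nat :=
  #|[set t : n.-tuple 'I_n.+1 | padded_partition t && P (parts_of t)]|.

Definition odd_parts_ge5 (s : seq nat) : bool :=
  all (fun x => odd x && (5 <= x)) s.

Definition cond_B (s : seq nat) : bool :=
  let big := [seq x <- s | 1 < x] in
  [&& count_mem 1 s <= 2,
      uniq big,
      3 <= size big,
      nth 0 s 0 == (nth 0 s 1).+1 &
      nth 0 s 1 == (nth 0 s 2).+1].

From mathcomp Require Import all_boot zify.
Set Implicit Arguments. Unset Strict Implicit. Unset Printing Implicit Defensive.

(* Write O_k(n) for the number of partitions of n into odd parts >= k, D_k(n)
   for those into distinct parts >= k, and E(n), C(n) for the partitions counted
   by D_2(n) whose two, resp. three, largest parts are consecutive.  Counting
   according to whether a part k occurs gives O_k(n) = O_k(n-k) + O_(k+2)(n) for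
   odd k and D_1(n) = D_2(n) + D_2(n-1); with Euler's theorem O_1 = D_1, proved by
   Glaisher's bijection (merge equal pairs x + x into 2x, for x = 1, 2, 3, ... in
   turn), this yields O_5(n) = D_2(n) - D_2(n-2) - D_2(n-3) + D_2(n-5).  Adding 1
   to the largest part, resp. to the two largest parts, gives
   D_2(n) = D_2(n-1) + E(n) and E(n) = E(n-2) + C(n).  Deleting the (at most two)
   parts 1 shows that the right-hand side counts C(n) + C(n-1) + C(n-2), which
   telescopes to the same combination of D_2. *)

Lemma geq_trans : transitive geq.
Proof. by move=> a b c /= ba cb; apply: leq_trans cb ba. Qed.

Lemma geq_total : total geq.
Proof. by move=> a b; rewrite /= leq_total. Qed.

Lemma geq_anti : antisymmetric geq.
Proof. by move=> a b /andP[ba ab]; apply/anti_leq/andP. Qed.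

Lemma sorted_geq_eq (s1 s2 : seq nat) :
  sorted geq s1 -> sorted geq s2 -> perm_eq s1 s2 -> s1 = s2.
Proof. exact: (sorted_eq geq_trans geq_anti). Qed.

Lemma sorted_geq_cat (s1 s2 : seq nat) :
  sorted geq s1 -> sorted geq s2 -> allrel geq s1 s2 -> sorted geq (s1 ++ s2).
Proof. by rewrite !(sorted_pairwise geq_trans) pairwise_cat => -> -> ->. Qed.

Lemma sorted_geq_cat_nseq (s : seq nat) k v :
  sorted geq s -> all (leq v) s -> sorted geq (s ++ nseq k v).
Proof.
move=> s_sorted s_ge; apply: sorted_geq_cat => //.
  by elim: k => [|[|k] IH] //=; rewrite leqnn.
by apply/allrelP => x y /(allP s_ge) vx; rewrite mem_nseq => /andP[_ /eqP->].
Qed.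

Lemma sorted_geq_split k (s : seq nat) : sorted geq s ->
  s = [seq x <- s | k < x] ++ [seq x <- s | x <= k].
Proof.
move=> s_sorted; apply: sorted_geq_eq => //.
  apply: sorted_geq_cat; try exact: sorted_filter geq_trans _ _ s_sorted.
  by apply/allrelP => x y; rewrite !mem_filter => /andP[kx _] /andP[yk _] /=; lia.
rewrite perm_sym (@eq_filter _ (fun x => x <= k) (predC (fun x => k < x))).
  by rewrite perm_filterC.
by move=> x; rewrite /= leqNgt.
Qed.

Lemma mem_count_gt0 (T : eqType) (x : T) s : (x \in s) = (0 < count_mem x s).
Proof. by rewrite -has_pred1 has_count. Qed.

Lemma perm_count_mem (T : eqType) (s1 s2 : seq T) :
  (forall x, count_mem x s1 = count_mem x s2) -> perm_eq s1 s2.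
Proof. by move=> count12; apply/allP => x _; rewrite /= count12. Qed.

Lemma count_predI_pred1 (T : eqType) (x : T) (a : pred T) s :
  count (predI (pred1 x) a) s = a x * count_mem x s.
Proof.
elim: s => [|y s IH] /=; rewrite ?muln0 // IH.
by case: eqVneq => [->|] //=; case: (a x).
Qed.

Lemma notin_all (T : eqType) (x : T) s : (x \notin s) = all (fun y => y != x) s.
Proof. by rewrite -has_pred1 -all_predC. Qed.

Definition is_partition n (s : seq nat) :=
  [&& sorted geq s, all (fun x => 0 < x) s & sumn s == n].

Lemma is_partition_sort (t : seq nat) :
  is_partition (sumn t) (sort geq t) = all (fun x => 0 < x) t.
Proof.
have perm_t : perm_eq (sort geq t) t by rewrite perm_sort.
rewrite /is_partition (perm_all _ perm_t) (perm_sumn perm_t) eqxx andbT.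
by rewrite sort_sorted //; exact: geq_total.
Qed.

Lemma sort_perm_partition n (s t : seq nat) :
  is_partition n s -> perm_eq t s -> sort geq t = s.
Proof.
case/and3P=> s_sorted _ _ ts; apply: sorted_geq_eq => //.
  by apply: sort_sorted; exact: geq_total.
by rewrite perm_sort.
Qed.

Lemma partition_part_le n s x : is_partition n s -> x \in s -> x <= n.
Proof.
case/and3P=> _ _ /eqP <-; elim: s => [//|y s IH].
by rewrite inE /= => /orP[/eqP->|/IH]; lia.
Qed.

Lemma partition_size_le n s : is_partition n s -> size s <= n.
Proof.
case/and3P=> _ + /eqP <-; elim: s => [//|x s IH] /= /andP[x_gt0 /IH]; lia.
Qed.

Lemma padded_partitionP n (t : n.-tuple 'I_n.+1) :
  padded_partition t -> is_partition n (parts_of t).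
Proof.
case/andP=> t_sorted t_sum; rewrite /is_partition /parts_of filter_all.
rewrite (sorted_filter geq_trans) //=.
suff -> : sumn [seq x <- map val t | 0 < x] = sumn (map val t) by [].
by elim: (map _ t) => [//|[|x] s /= ->].
Qed.

Lemma padded_partition_parts n (t : n.-tuple 'I_n.+1) : padded_partition t ->
  map (@nat_of_ord n.+1) t = parts_of t ++ nseq (n - size (parts_of t)) 0.
Proof.
case/andP=> /(sorted_geq_split 0) t_split _.
set zeros := [seq x <- _ | x <= 0] in t_split.
have size_zeros : size zeros = n - size (parts_of t).
  have := congr1 size t_split; rewrite size_cat size_map size_tuple.
  rewrite /parts_of; lia.
have /all_pred1P zerosE : all (pred1 0) zeros.
  by apply/allP => x; rewrite mem_filter leqn0 => /andP[].
by rewrite [LHS]t_split zerosE size_zeros.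
Qed.

Lemma parts_of_inj n (t1 t2 : n.-tuple 'I_n.+1) :
  padded_partition t1 -> padded_partition t2 -> parts_of t1 = parts_of t2 -> t1 = t2.
Proof.
move=> t1P t2P e; apply/val_inj/(inj_map val_inj).
by rewrite /= (padded_partition_parts t1P) (padded_partition_parts t2P) e.
Qed.

Definition pad_partition n (s : seq nat) : n.-tuple 'I_n.+1 :=
  insubd (nseq_tuple n ord0) (map inord (s ++ nseq (n - size s) 0)).

Lemma pad_partitionK n s : is_partition n s ->
  padded_partition (pad_partition n s) /\ parts_of (pad_partition n s) = s.
Proof.
move=> sP; have /and3P[s_sorted s_pos /eqP s_sum] := sP.
have padE : map (@nat_of_ord n.+1) (pad_partition n s) = s ++ nseq (n - size s) 0.
  rewrite val_insubd size_map size_cat size_nseq subnKC ?partition_size_le // eqxx.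
  rewrite -map_comp; apply: map_id_in => x; rewrite mem_cat => /orP[xs|].
    by rewrite /= inordK // ltnS (partition_part_le sP).
  by rewrite mem_nseq => /andP[_ /eqP->]; rewrite /= inordK.
rewrite /padded_partition /parts_of padE filter_cat (all_filterP s_pos) filter_nseq cats0.
by rewrite sorted_geq_cat_nseq // ?sumn_cat ?sumn_nseq ?s_sum ?addn0 ?eqxx //; apply/allP.
Qed.

Section Counting.

Implicit Types (P Q : pred (seq nat)) (f g : seq nat -> seq nat).

Lemma npart_le n m P Q f :
  (forall s, is_partition n s && P s -> is_partition m (f s) && Q (f s)) ->
  {in [pred s | is_partition n s && P s] &, injective f} ->
  npart n P <= npart m Q.
Proof.
move=> fPQ f_inj; pose F (t : n.-tuple 'I_n.+1) := pad_partition m (f (parts_of t)).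
have inA (t : n.-tuple 'I_n.+1) :
    t \in [set t | padded_partition t && P (parts_of t)] ->
    padded_partition t /\ is_partition n (parts_of t) && P (parts_of t).
  by rewrite inE => /andP[tP ->]; rewrite (padded_partitionP tP).
have F_parts (t : n.-tuple 'I_n.+1) : is_partition n (parts_of t) && P (parts_of t) ->
    [/\ padded_partition (F t), parts_of (F t) = f (parts_of t) & Q (f (parts_of t))].
  by move=> /fPQ /andP[/pad_partitionK[FtP Ft] Qft].
rewrite /npart -(card_in_imset (f := F)).
  apply/subset_leq_card/subsetP => _ /imsetP[t /inA[_ /F_parts[FtP Ft Qft]] ->].
  by rewrite inE FtP Ft.
move=> t1 t2 /inA[t1P /[dup] Pt1 /F_parts[_ Ft1 _]] /inA[t2P /[dup] Pt2 /F_parts[_ Ft2 _]].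
by move=> eqF; apply: parts_of_inj => //; apply: f_inj; rewrite // -Ft1 -Ft2 eqF.
Qed.

Lemma npart_bij n m P Q f g :
  (forall s, is_partition n s && P s -> is_partition m (f s) && Q (f s)) ->
  (forall s, is_partition m s && Q s -> is_partition n (g s) && P (g s)) ->
  (forall s, is_partition n s && P s -> g (f s) = s) ->
  (forall s, is_partition m s && Q s -> f (g s) = s) ->
  npart n P = npart m Q.
Proof.
move=> fPQ gQP fK gK; apply/eqP; rewrite eqn_leq.
rewrite (npart_le fPQ) ?(npart_le gQP) //.
  exact: (can_in_inj (g := f)).
exact: (can_in_inj (g := g)).
Qed.

Lemma npart_eq n P Q : (forall s, is_partition n s -> P s = Q s) -> npart n P = npart n Q.
Proof.
move=> PQ; apply: eq_card => t; rewrite !inE.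
by case tP: (padded_partition t); rewrite //= PQ ?padded_partitionP.
Qed.

Lemma npart_predID n P Q :
  npart n P = npart n (fun s => P s && Q s) + npart n (fun s => P s && ~~ Q s).
Proof.
rewrite /npart -(cardsID [set t : n.-tuple 'I_n.+1 | Q (parts_of t)]).
by congr (_ + _); apply: eq_card => t; rewrite !inE; case: (Q _); rewrite ?andbT ?andbF.
Qed.

Lemma npart_sum_fibers n N (P : pred (seq nat)) (f : seq nat -> nat) :
  (forall s, is_partition n s -> P s -> f s < N) ->
  npart n P = \sum_(j < N) npart n (fun s => P s && (f s == j)).
Proof.
move=> f_lt; have -> : npart n P = npart n (fun s => P s && (f s < N)).
  by apply: npart_eq => s sP; case Ps: (P s); rewrite // f_lt.
elim: N {f_lt} => [|N IH].
  rewrite big_ord0 /npart; apply/eqP; rewrite cards_eq0; apply/eqP/setP => t.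
  by rewrite !inE ltn0 !andbF.
rewrite big_ord_recr -IH /= (npart_predID _ _ (fun s => f s < N)).
by congr (_ + _); apply: npart_eq => s _; rewrite -andbA; congr (_ && _); lia.
Qed.

End Counting.

Lemma npart_add_part n c (P Q : pred (seq nat)) : 0 < c ->
  (forall s1 s2, perm_eq s1 s2 -> Q s1 = Q s2) ->
  (forall s, all (fun x => 0 < x) s -> Q (c :: s) = P s) ->
  npart (n + c) (fun s => Q s && (c \in s)) = npart n P.
Proof.
move=> c_gt0 Q_perm QP.
have sort_perm s : perm_eq (sort geq s) s by apply/permEl/perm_sort.
apply: (npart_bij (f := rem c) (g := fun s => sort geq (c :: s))).
- move=> s /andP[/and3P[s_sorted s_pos /eqP s_sum] /andP[Qs cs]].
  have s_rem := perm_to_rem cs.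
  move: s_pos s_sum; rewrite (perm_all _ s_rem) (perm_sumn s_rem) /= => /andP[_ rem_pos] s_sum.
  rewrite /is_partition (subseq_sorted geq_trans (rem_subseq c s)) // rem_pos.
  by rewrite -QP // -(Q_perm _ _ s_rem) Qs andbT; apply/eqP; lia.
- move=> s /andP[/and3P[_ s_pos /eqP s_sum] Ps].
  have := is_partition_sort (c :: s); rewrite /= c_gt0 s_pos s_sum addnC => ->.
  by rewrite (Q_perm _ (c :: s)) // QP // Ps (perm_mem (sort_perm _)) mem_head.
- move=> s /andP[sP /andP[_ cs]]; apply: sort_perm_partition sP _.
  by rewrite perm_sym perm_to_rem.
- move=> s /andP[/and3P[s_sorted _ _] _]; apply: sorted_geq_eq => //.
    exact: (subseq_sorted geq_trans (rem_subseq _ _) (sort_sorted geq_total _)).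
  have c_sort : c \in sort geq (c :: s) by rewrite (perm_mem (sort_perm _)) mem_head.
  by rewrite -(perm_cons c) perm_sym -(permPl (sort_perm (c :: s))) perm_to_rem.
Qed.

Definition odd_parts_ge m (s : seq nat) := all (fun x => odd x && (m <= x)) s.

Definition distinct_parts_ge m (s : seq nat) := uniq s && all (fun x => m <= x) s.

Lemma odd_parts_ge_notin m s : odd m ->
  odd_parts_ge m s && (m \notin s) = odd_parts_ge m.+2 s.
Proof.
move=> m_odd; rewrite notin_all -all_predI; apply: eq_all => x /=.
case x_odd: (odd x) => //=.
have : x != m.+1 by apply: contraTneq x_odd => ->; rewrite /= m_odd.
lia.
Qed.

Lemma distinct_parts_ge_notin m s :
  distinct_parts_ge m s && (m \notin s) = distinct_parts_ge m.+1 s.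
Proof.
rewrite /distinct_parts_ge -andbA notin_all -all_predI; congr (_ && _).
by apply: eq_all => x /=; rewrite ltn_neqAle eq_sym andbC.
Qed.

Lemma npart_odd_parts_ge_rec k m : odd m ->
  npart (k + m) (odd_parts_ge m)
  = npart k (odd_parts_ge m) + npart (k + m) (odd_parts_ge m.+2).
Proof.
move=> m_odd; rewrite (npart_predID _ _ (fun s => m \in s)); congr (_ + _).
  apply: npart_add_part; first by case: m m_odd.
    by move=> s1 s2 s12; rewrite /odd_parts_ge (perm_all _ s12).
  by move=> s _; rewrite /odd_parts_ge /= m_odd leqnn.
by apply: npart_eq => s _; rewrite odd_parts_ge_notin.
Qed.

Lemma npart_distinct_parts_ge_rec k m : 0 < m ->
  npart (k + m) (distinct_parts_ge m)
  = npart k (distinct_parts_ge m.+1) + npart (k + m) (distinct_parts_ge m.+1).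
Proof.
move=> m_gt0; rewrite (npart_predID _ _ (fun s => m \in s)); congr (_ + _).
  apply: npart_add_part => //.
    by move=> s1 s2 s12; rewrite /distinct_parts_ge (perm_uniq s12) (perm_all _ s12).
  move=> s _; rewrite -distinct_parts_ge_notin /distinct_parts_ge /= leqnn.
  by case: (m \in s); case: (uniq s); rewrite ?andbT ?andbF.
by apply: npart_eq => s _; rewrite distinct_parts_ge_notin.
Qed.

Definition with_mults x a b (t : seq nat) :=
  nseq a x ++ nseq b x.*2 ++ [seq z <- t | z \notin [:: x; x.*2]].

Lemma count_with_mults x a b t j : 0 < x ->
  count_mem j (with_mults x a b t)
  = if j == x then a else if j == x.*2 then b else count_mem j t.
Proof.
move=> x_gt0; have x_neq2x : x != x.*2 by lia.
rewrite /with_mults !count_cat !count_nseq count_filter count_predI_pred1 /= !inE.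
case: (eqVneq j x) => [->|_]; first by rewrite eq_sym (negPf x_neq2x) /=; lia.
by case: (eqVneq j x.*2) => [->|_] /=; lia.
Qed.

Lemma sumn_with_mults x a b t :
  sumn (with_mults x a b t) = a * x + b * x.*2 + sumn [seq z <- t | z \notin [:: x; x.*2]].
Proof. by rewrite /with_mults !sumn_cat !sumn_nseq addnA !(mulnC _ a) (mulnC _ b). Qed.

Lemma with_mults_count x t : 0 < x ->
  perm_eq t (with_mults x (count_mem x t) (count_mem x.*2 t) t).
Proof.
move=> x_gt0; apply: perm_count_mem => j; rewrite count_with_mults //.
by case: (eqVneq j x) => [->|_] //; case: (eqVneq j x.*2) => [->|_].
Qed.

Lemma with_mults_partition n x a b s : 0 < x -> is_partition n s ->
  a * x + b * x.*2 = count_mem x s * x + count_mem x.*2 s * x.*2 ->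
  is_partition n (sort geq (with_mults x a b s)).
Proof.
move=> x_gt0 /and3P[_ s_pos /eqP s_sum] ab_sum.
have := perm_sumn (with_mults_count s x_gt0); rewrite !sumn_with_mults -ab_sum s_sum => ->.
rewrite -sumn_with_mults is_partition_sort /with_mults !all_cat !all_nseq.
rewrite double_gt0 x_gt0 !orbT /=.
by apply/allP => z; rewrite mem_filter => /andP[_ /(allP s_pos)].
Qed.

Lemma sort_with_mults_id n x a b s t : 0 < x -> is_partition n s ->
  a = count_mem x s -> b = count_mem x.*2 s ->
  (forall j, j != x -> j != x.*2 -> count_mem j t = count_mem j s) ->
  sort geq (with_mults x a b t) = s.
Proof.
move=> x_gt0 sP -> -> t_count; apply: (sort_perm_partition sP); apply: perm_count_mem => j.
rewrite count_with_mults //.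
by case: (eqVneq j x) => [->|jx] //; case: (eqVneq j x.*2) => [->|j2x] //; apply: t_count.
Qed.

Definition mult_pred (A : nat -> nat -> bool) (s : seq nat) :=
  all (fun j => A j (count_mem j s)) s.

Lemma mult_predP (A : nat -> nat -> bool) s :
  reflect (forall j, 0 < count_mem j s -> A j (count_mem j s)) (mult_pred A s).
Proof.
apply: (iffP allP) => A_s j; first by rewrite -mem_count_gt0 => /A_s.
by rewrite mem_count_gt0 => /A_s.
Qed.

Lemma npart_merge_pairs n x (A A' : nat -> nat -> bool) : 0 < x ->
  (forall c, A x c) -> (forall c, A x.*2 c = (c == 0)) ->
  (forall c, A' x c = (c <= 1)) -> (forall c, A' x.*2 c) ->
  (forall j, j != x -> j != x.*2 -> A' j =1 A j) ->
  npart n (mult_pred A) = npart n (mult_pred A').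
Proof.
move=> x_gt0 Ax A2x A'x A'2x A'A; have x2x_neq : x.*2 != x by lia.
pose merge s := sort geq (with_mults x (count_mem x s %% 2) (count_mem x s %/ 2) s).
pose split s := sort geq (with_mults x (count_mem x s + (count_mem x.*2 s).*2) 0 s).
have count_sort_with j a b t : count_mem j (sort geq (with_mults x a b t))
    = if j == x then a else if j == x.*2 then b else count_mem j t.
  by rewrite count_sort count_with_mults.
have no_2x s : mult_pred A s -> count_mem x.*2 s = 0.
  by move=> /mult_predP A_s; case: (posnP (count_mem x.*2 s)) => // /A_s; rewrite A2x => /eqP.
have x_le1 s : mult_pred A' s -> count_mem x s <= 1.
  by move=> /mult_predP A'_s; case: (posnP (count_mem x s)) => [-> //|/A'_s]; rewrite A'x.
apply: (npart_bij (f := merge) (g := split)).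
- move=> s /andP[sP As]; rewrite with_mults_partition //; last first.
    by rewrite no_2x // {3}(divn_eq (count_mem x s) 2); nia.
  apply/mult_predP => j; rewrite count_sort_with.
  case: (eqVneq j x) => [-> _|jx]; first by rewrite A'x; lia.
  case: (eqVneq j x.*2) => [-> _|j2x]; first exact: A'2x.
  by rewrite A'A //; apply/mult_predP.
- move=> s /andP[sP A's]; rewrite with_mults_partition //; last by rewrite -muln2; nia.
  apply/mult_predP => j; rewrite count_sort_with.
  case: (eqVneq j x) => [-> _|jx]; first exact: Ax.
  case: (eqVneq j x.*2) => [-> //|j2x].
  by rewrite -A'A //; apply/mult_predP.
- move=> s /andP[sP As]; apply: (sort_with_mults_id x_gt0 sP); rewrite /merge.
  + by rewrite !count_sort_with !eqxx (negPf x2x_neq) /=; lia.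
  + by rewrite no_2x.
  + by move=> j jx j2x; rewrite count_sort_with (negPf jx) (negPf j2x).
- move=> s /andP[sP A's]; apply: (sort_with_mults_id x_gt0 sP); rewrite /split.
  + by have := x_le1 s A's; rewrite !count_sort_with !eqxx ?(negPf x2x_neq) /=; lia.
  + by have := x_le1 s A's; rewrite !count_sort_with !eqxx ?(negPf x2x_neq) /=; lia.
  + by move=> j jx j2x; rewrite count_sort_with (negPf jx) (negPf j2x).
Qed.

(* Stage m of Glaisher's bijection: parts <= m are distinct, and a part j > m
   may occur only if j is odd or j/2 <= m.  Stage 0 allows exactly the odd parts,
   and stage n exactly the distinct parts of a partition of n. *)
Definition glaisher_mults m j c : bool :=
  if j <= m then c <= 1 else odd j || (j./2 <= m) || (c == 0).

Lemma npart_glaisher_succ n m :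
  npart n (mult_pred (glaisher_mults m)) = npart n (mult_pred (glaisher_mults m.+1)).
Proof.
rewrite /glaisher_mults; apply: (@npart_merge_pairs _ m.+1) => // [c|c|c|c|j jx j2x c].
- by rewrite ltnn; lia.
- by rewrite odd_double doubleK ltnn ifN //; lia.
- by rewrite leqnn.
- by rewrite odd_double doubleK leqnn ifN ?orbT //; lia.
- by case: (leqP j m.+1); case: (leqP j m); lia.
Qed.

Lemma npart_odd_distinct n : npart n (all odd) = npart n uniq.
Proof.
have stages m :
    npart n (mult_pred (glaisher_mults 0)) = npart n (mult_pred (glaisher_mults m)).
  by elim: m => // m ->; exact: npart_glaisher_succ.
transitivity (npart n (mult_pred (glaisher_mults 0))).
  apply: npart_eq => s /and3P[_ s_pos _]; apply: eq_in_all => j js.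
  have := allP s_pos j js; have := js; rewrite mem_count_gt0 /glaisher_mults.
  by move=> c_pos j_pos; rewrite leqNgt j_pos /= (gtn_eqF c_pos) orbF; lia.
rewrite (stages n); apply: npart_eq => s sP.
rewrite /mult_pred (eq_in_all (a2 := fun j => count_mem j s <= 1)); last first.
  by move=> j js; rewrite /glaisher_mults (partition_part_le sP js).
apply/allP/idP => [s_le1 | s_uniq j js]; last by rewrite count_uniq_mem // js.
apply: count_mem_uniq => j; case: (boolP (j \in s)) => js; last exact/count_memPn.
by have := s_le1 j js; have := js; rewrite mem_count_gt0; lia.
Qed.

Lemma npart_odd_parts_ge5_eq n : 5 <= n ->
  npart n (odd_parts_ge 5) + npart (n - 2) (distinct_parts_ge 2)
    + npart (n - 3) (distinct_parts_ge 2)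
  = npart n (distinct_parts_ge 2) + npart (n - 5) (distinct_parts_ge 2).
Proof.
move=> n_ge5; have [k ->] : exists k, n = k.+4.+1 by exists (n - 5); lia.
have euler j : npart j (odd_parts_ge 1) = npart j (distinct_parts_ge 1).
  rewrite (@npart_eq _ _ (all odd)) => [|s _]; last by apply: eq_all => x; lia.
  rewrite npart_odd_distinct; apply: npart_eq => s /and3P[_ s_pos _].
  by rewrite /distinct_parts_ge s_pos andbT.
have O1 j := npart_odd_parts_ge_rec j (isT : odd 1).
have U1 j := npart_distinct_parts_ge_rec j (isT : 0 < 1).
move: (O1 k.+4) (O1 k.+1) (npart_odd_parts_ge_rec k.+2 (isT : odd 3)).
move: (U1 k.+4) (U1 k.+3) (U1 k.+1) (U1 k).
rewrite !subSS !subn0 !addn1 addn3 !euler; lia.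
Qed.

Lemma distinct_partitionE n m s : 0 < m ->
  is_partition n s && distinct_parts_ge m s
  = [&& sorted gtn s, all (fun x => m <= x) s & sumn s == n].
Proof.
move=> m_gt0; rewrite /is_partition /distinct_parts_ge gtn_sorted_uniq_geq.
case s_ge: (all (fun x => m <= x) s); last by rewrite !andbF.
have -> : all (fun x => 0 < x) s by apply/allP => x /(allP s_ge); lia.
by case: (uniq s); case: (sorted _ s); rewrite ?andbT ?andbF.
Qed.

Lemma distinct_partition_andE n m s b : 0 < m ->
  is_partition n s && (distinct_parts_ge m s && b)
  = [&& sorted gtn s, all (fun x => m <= x) s, sumn s == n & b].
Proof. by move=> m_gt0; rewrite andbA distinct_partitionE // -!andbA. Qed.

Definition consecutive_at i (s : seq nat) := nth 0 s i == (nth 0 s i.+1).+1.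

Definition top2_consecutive (s : seq nat) := distinct_parts_ge 2 s && consecutive_at 0 s.

Definition top3_consecutive (s : seq nat) := top2_consecutive s && consecutive_at 1 s.

Definition succ_head (s : seq nat) := if s is x :: r then x.+1 :: r else s.

Definition pred_head (s : seq nat) := if s is x :: r then x.-1 :: r else s.

(* Adding 1 to the largest part makes it non-consecutive to the second one;
   conversely, if they are not consecutive, the largest part minus 1 still
   exceeds the second one, and it is at least 2 because n >= 3. *)
Lemma npart_distinct_parts_ge2_succ_head k :
  npart k.+3 (distinct_parts_ge 2)
  = npart k.+2 (distinct_parts_ge 2) + npart k.+3 top2_consecutive.
Proof.
rewrite (npart_predID _ _ (consecutive_at 0)) addnC; congr (_ + _); symmetry.
apply: (npart_bij (f := succ_head) (g := pred_head)) => -[|x [|y r]];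
  rewrite ?distinct_partition_andE ?distinct_partitionE //= /consecutive_at /=; try lia.
all: by move=> ?; rewrite prednK //; lia.
Qed.

Definition succ_head2 (s : seq nat) := if s is x :: y :: r then x.+1 :: y.+1 :: r else s.

Definition pred_head2 (s : seq nat) := if s is x :: y :: r then x.-1 :: y.-1 :: r else s.

(* The same with the two largest parts; n >= 6 excludes [:: 3; 2], which
   pred_head2 would map to [:: 2; 1]. *)
Lemma npart_top2_consecutive_succ_head2 k :
  npart (k + 6) top2_consecutive
  = npart (k + 4) top2_consecutive + npart (k + 6) top3_consecutive.
Proof.
rewrite (npart_predID _ _ (consecutive_at 1)) addnC; congr (_ + _); symmetry.
rewrite [RHS](@npart_eq _ _ (fun s => distinct_parts_ge 2 s
    && (consecutive_at 0 s && ~~ consecutive_at 1 s))) => [|s _]; last by rewrite -andbA.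
apply: (npart_bij (f := succ_head2) (g := pred_head2)) => -[|x [|y [|z r]]];
  rewrite ?distinct_partition_andE //= /consecutive_at /=; try lia.
all: by move=> ?; rewrite !prednK //; lia.
Qed.

Lemma partition_split_ones n s : is_partition n s ->
  s = [seq x <- s | 1 < x] ++ nseq (count_mem 1 s) 1.
Proof.
case/and3P=> /(sorted_geq_split 1) s_split s_pos _; rewrite [LHS]s_split; congr (_ ++ _).
have /all_pred1P -> : all (pred1 1) [seq x <- s | x <= 1].
  by apply/allP => x; rewrite mem_filter => /andP[x_le1 /(allP s_pos)] /=; lia.
rewrite size_filter; congr nseq; apply: eq_in_count => x /(allP s_pos) /=; lia.
Qed.

Lemma cond_B_cat_ones t j : all (fun x => 1 < x) t ->
  cond_B (t ++ nseq j 1) = (j <= 2) && top3_consecutive t.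
Proof.
move=> t_gt1; have t_no1 : count_mem 1 t = 0.
  by apply/count_memPn/negP => /(allP t_gt1).
rewrite /cond_B filter_cat (all_filterP t_gt1) filter_nseq /= cats0 count_cat t_no1 count_nseq /=.
rewrite /top3_consecutive /top2_consecutive /distinct_parts_ge t_gt1 /consecutive_at.
case: (uniq t); rewrite ?andbF //.
case: t t_gt1 {t_no1} => [|x [|y [|z r]]] /=; lia.
Qed.

Lemma npart_cond_B_count1 n j : j <= 2 -> j <= n ->
  npart n (fun s => cond_B s && (count_mem 1 s == j)) = npart (n - j) top3_consecutive.
Proof.
move=> j_le2 /subnK <-; rewrite addnK; move: (n - j) => k.
have top3_gt1 t : top3_consecutive t -> all (fun x => 1 < x) t.
  by case/andP=> /andP[/andP[_ ->]].
apply: (npart_bij (f := filter (fun x => 1 < x)) (g := fun t => t ++ nseq j 1)).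
- move=> s /andP[sP /andP[Bs /eqP s_ones]].
  have t_gt1 := filter_all (fun x => 1 < x) s.
  have := partition_split_ones sP; rewrite s_ones.
  move: [seq x <- s | 1 < x] t_gt1 => t t_gt1 t_split.
  move: sP Bs; rewrite t_split cond_B_cat_ones // j_le2 /= => /and3P[/cat_sorted2[t_sorted _]].
  rewrite all_cat sumn_cat sumn_nseq => /andP[t_pos _] /eqP t_sum ->.
  by rewrite /is_partition t_sorted t_pos /=; lia.
- move=> t /andP[/and3P[t_sorted t_pos /eqP t_sum] t3]; have t_gt1 := top3_gt1 t t3.
  have t_no1 : count_mem 1 t = 0 by apply/count_memPn/negP => /(allP t_gt1).
  rewrite cond_B_cat_ones // j_le2 t3 count_cat t_no1 count_nseq /= mul1n eqxx andbT.
  rewrite /is_partition sorted_geq_cat_nseq ?all_cat ?t_pos ?sumn_cat ?sumn_nseq ?t_sum //=.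
  by rewrite all_nseq orbT mul1n eqxx.
- by move=> s /and3P[sP _ /eqP <-]; rewrite -(partition_split_ones sP).
- by move=> t /andP[_ /top3_gt1 t_gt1]; rewrite filter_cat (all_filterP t_gt1) filter_nseq cats0.
Qed.

Lemma npart_cond_B k : npart k.+2 cond_B
  = npart k.+2 top3_consecutive + npart k.+1 top3_consecutive + npart k top3_consecutive.
Proof.
rewrite (@npart_sum_fibers _ 3 _ (count_mem 1)) => [|s _ /and5P[] //].
by rewrite !big_ord_recr big_ord0 /= add0n !npart_cond_B_count1 // !subSS !subn0.
Qed.

Lemma npart_cond_B_eq n : 8 <= n ->
  npart n cond_B + npart (n - 2) (distinct_parts_ge 2) + npart (n - 3) (distinct_parts_ge 2)
  = npart n (distinct_parts_ge 2) + npart (n - 5) (distinct_parts_ge 2).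
Proof.
move=> n_ge8; have [k ->] : exists k, n = k.+4.+4 by exists (n - 8); lia.
have D2 := npart_distinct_parts_ge2_succ_head; have E := npart_top2_consecutive_succ_head2.
move: (npart_cond_B k.+4.+2) (E k.+2) (E k.+1) (E k).
move: (D2 k.+4.+1) (D2 k.+4) (D2 k.+2) (D2 k.+1).
rewrite !subSS !subn0 !addnS !addn0; lia.
Qed.

Theorem proposition2p1 (n : nat) : 9 <= n ->
  npart n odd_parts_ge5 = npart n cond_B.
Proof.
move=> n_ge9; rewrite -[odd_parts_ge5]/(odd_parts_ge 5).
have := npart_odd_parts_ge5_eq (leq_trans (isT : 5 <= 9) n_ge9).
have := npart_cond_B_eq (ltnW n_ge9).
lia.
Qed.
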